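(* Let $n\ge1$ and let $A$ be a set with an $(n+1)$-ary operation $\theta$, binary operations $\alpha_1,\dots,\alpha_n$ and elements $e_1,\dots,e_n$ such that $\alpha_i(a,a)=e_i$ and $\theta(\alpha_1(a,b),\dots,\alpha_n(a,b),b)=a$ for all $a,b\in A$. The following conditions are equivalent: (i) for every $b\in A$ the map $\theta_b:A^n\to A$, $\theta_b(x_1,\dots,x_n)=\theta(x_1,\dots,x_n,b)$, is a bijection; (ii) for all $a,b\in A$, the equation $\theta(x_1,\dots,x_n,b)=a$ in the unknowns $x_1,\dots,x_n$ has a unique solution; (iii) for all $b,a_1,\dots,a_n\in A$, the system of equations $\alpha_i(x,b)=a_i$ $(1\le i\le n)$ in one unknown $x$ has a (unique) solution; (iv) for all $a_1,\dots,a_n,b\in A$ and every $i$ with $1\le i\le n$, $\alpha_i(\theta(a_1,\dots,a_n,b),b)=a_i$.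
   Context: The setting is that of an algebra $A$ in a protomodular variety, with $\theta,\alpha_i,e_i$ the operations and constants witnessing protomodularity as described in the claim. *)

From mathcomp Require Import all_boot.
Set Implicit Arguments.
Unset Strict Implicit.
Unset Printing Implicit Defensive.
(* Convention: an (n+1)-ary operation theta on A is represented as
   theta : ('I_n -> A) -> A -> A, the first n arguments packed as a
   function on 'I_n (= {0,..,n-1}, i.e. indices 1..n shifted), the last
   argument b separate. *)

From mathcomp Require Import all_boot.
From Stdlib Require Import FunctionalExtensionality.

(* For fixed b, theta_b and the tuple map a |-> (alpha_i(a, b))_i satisfy
   theta_b o alpha_b = id, so theta_b is a retraction with section alpha_b.
   For any retraction r with section s, "r is bijective", "r has unique
   preimages", "s has unique preimages" and "s o r = id" are equivalent. *)

Definition unique_preimages {X Y : Type} (f : X -> Y) :=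
  forall y, exists x, f x = y /\ forall x', f x' = y -> x' = x.

Section Retraction.

Context {X Y : Type}.

Lemma bij_unique_preimages (f : X -> Y) : bijective f -> unique_preimages f.
Proof.
case=> g fK gK y; exists (g y); split=> [|x' <-]; first exact: gK.
by rewrite fK.
Qed.

Context {r : X -> Y} {s : Y -> X}.
Hypothesis sK : cancel s r.

Lemma retract_unique_preimages_section :
  unique_preimages r -> unique_preimages s.
Proof.
move=> r_uniq x; have [x0 [_ x0_uniq]] := r_uniq (r x).
have srx : s (r x) = x by rewrite (x0_uniq _ (sK _)) [RHS](x0_uniq x).
by exists (r x); split=> // y <-; rewrite sK.
Qed.

Lemma section_unique_preimages_cancel : unique_preimages s -> cancel r s.
Proof. by move=> s_uniq x; have [y [<- _]] := s_uniq x; rewrite sK. Qed.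

End Retraction.

Theorem lemma3p12 (A : Type) (n : nat) (n_ge1 : 1 <= n)
  (theta : ('I_n -> A) -> A -> A) (alpha : 'I_n -> A -> A -> A) (e : 'I_n -> A)
  (alpha_diag : forall (i : 'I_n) (a : A), alpha i a a = e i)
  (theta_alpha : forall a b : A, theta (fun i => alpha i a b) b = a) :
  [<->
    (* (i) *) forall b : A, bijective (fun x : 'I_n -> A => theta x b);
    (* (ii) *) forall a b : A, exists x : 'I_n -> A,
                 theta x b = a /\ forall y : 'I_n -> A, theta y b = a -> y = x;
    (* (iii) *) forall (b : A) (a : 'I_n -> A), exists x : A,
                 (forall i, alpha i x b = a i) /\
                 forall y : A, (forall i, alpha i y b = a i) -> y = x;
    (* (iv) *) forall (a : 'I_n -> A) (b : A) (i : 'I_n),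
                 alpha i (theta a b) b = a i ].
Proof.
pose alpha_at b a := fun i => alpha i a b.
have thetaK b : cancel (alpha_at b) (theta^~ b) := theta_alpha^~ b.
tfae.
- by move=> theta_bij a b; apply: bij_unique_preimages.
- move=> theta_uniq b a.
  have [x [<- x_uniq]] := retract_unique_preimages_section (thetaK b)
                            (theta_uniq^~ b) a.
  exists x; split=> // y y_a; apply: x_uniq; exact: functional_extensionality.
- move=> alpha_uniq a b i.
  suff: cancel (theta^~ b) (alpha_at b) by move/(_ a)/(congr1 (@^~ i)).
  apply: section_unique_preimages_cancel (thetaK b) _ => a'.
  have [x [x_a' x_uniq]] := alpha_uniq b a'.
  exists x; split=> [|y /(congr1 (@^~ _))]; last exact: x_uniq.
  exact: functional_extensionality.
- move=> alphaK b; exists (alpha_at b) => [x|]; last exact: thetaK.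
  by apply: functional_extensionality => i; apply: alphaK.
Qed.
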